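(* Let $2\le n\le\kappa+1$. Then the subspace $\mathcal K_{[n;\kappa]}$ of skew-symmetric games in $\mathcal G_{[n;\kappa]}\cong\mathbb R^{n\kappa^n}$ has dimension $$\dim\mathcal K_{[n;\kappa]}=\kappa\binom{\kappa}{n-1}=\frac{\kappa\cdot\kappa!}{(n-1)!\,(\kappa-n+1)!}.$$
   Context: A finite game $G\in\mathcal G_{[n;\kappa]}$ has players $\{1,\dots,n\}$, each with strategy set $\{1,\dots,\kappa\}$, and payoff functions $c_i:\{1,\dots,\kappa\}^n\to\mathbb R$; it is identified with the vector of all payoff values in $\mathbb R^{n\kappa^n}$. $G$ is skew-symmetric if for every permutation $\sigma\in\mathbf S_n$, every $i$ and every profile, $c_i(x_1,\dots,x_n)=\mathrm{sgn}(\sigma)\,c_{\sigma(i)}(x_{\sigma^{-1}(1)},\dots,x_{\sigma^{-1}(n)})$. $\mathcal K_{[n;\kappa]}$ is the linear subspace of skew-symmetric games. *)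

From HB Require Import structures.
From mathcomp Require Import all_boot all_order all_algebra all_fingroup.
From mathcomp Require Import reals.
Set Implicit Arguments. Unset Strict Implicit. Unset Printing Implicit Defensive.
Import GRing.Theory Num.Theory.
Local Open Scope ring_scope.

(* Strategy set {1,...,kappa} is 'I_kappa, players {1,...,n} are 'I_n.
   A strategy profile is a finite function 'I_n -> 'I_kappa. *)
Definition profile (n k : nat) := {ffun 'I_n -> 'I_k}.

(* A game in G_[n;kappa]: the vector of all payoff values c_i(x),
   i.e. an element of R^(n * kappa^n), viewed as a finite function
   on pairs (player, profile).  This is an R-vector space (vectType). *)
Definition game (R : realType) (n k : nat) :=
  {ffun 'I_n * profile n k -> R^o}.

Definition sgnR (R : realType) (n : nat) (s : 'S_n) : R := (-1) ^+ odd_perm s.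

Definition game_act (R : realType) (n k : nat) (s : 'S_n) (c : game R n k)
  : game R n k :=
  [ffun p : 'I_n * profile n k =>
     sgnR R s * c (s p.1, [ffun j => p.2 ((s^-1)%g j)])].

Definition skew_symmetric (R : realType) (n k : nat) (c : game R n k) : Prop :=
  forall (s : 'S_n) (i : 'I_n) (x : profile n k),
    c (i, x) = sgnR R s * c (s i, [ffun j => x ((s^-1)%g j)]).

Definition skew_defect (R : realType) (n k : nat) (s : 'S_n) (c : game R n k)
  : game R n k := c - game_act s c.

Lemma skew_defect_linear (R : realType) (n k : nat) (s : 'S_n) :
  linear (@skew_defect R n k s).
Proof.
move=> a c d; apply/ffunP => p; rewrite !ffunE /game_act /=.
rewrite /GRing.scale /= !mulrDr !mulrN !mulrA [sgnR R s * a]mulrC.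
set u := c p; set v := d p; set w := a * _; set z := _ * d _.
by rewrite opprD !addrA; congr (_ - _); rewrite addrAC.
Qed.

HB.instance Definition _ (R : realType) (n k : nat) (s : 'S_n) :=
  GRing.isLinear.Build R (game R n k) (game R n k) _ (@skew_defect R n k s)
    (skew_defect_linear s).

Definition skew_space (R : realType) (n k : nat) : {vspace game R n k} :=
  (\bigcap_(s : 'S_n) lker (linfun (@skew_defect R n k s)))%VS.

Lemma mem_skew_space (R : realType) (n k : nat) (c : game R n k) :
  c \in skew_space R n k <-> skew_symmetric c.
Proof.
rewrite /skew_space memvE; split.
- move/subv_bigcapP => H s i x.
  have := H s isT; rewrite -memvE memv_ker lfunE /=.
  move/eqP/ffunP/(_ (i, x)); rewrite !ffunE /= => /eqP; rewrite subr_eq0 => /eqP.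
  done.
- move=> H; apply/subv_bigcapP => s _; rewrite -memvE memv_ker lfunE /=.
  apply/eqP/ffunP => -[i x]; rewrite !ffunE /=; apply/eqP; rewrite subr_eq0.
  by apply/eqP; apply: H.
Qed.

From HB Require Import structures.
From mathcomp Require Import all_boot all_order all_algebra all_fingroup.
From mathcomp Require Import reals.
Set Implicit Arguments. Unset Strict Implicit. Unset Printing Implicit Defensive.
Import GRing.Theory Num.Theory.

(* The symmetric group acts on pairs p = (player i, profile x) by relabelling
   the players, and c is skew-symmetric iff c p = sgn(s) c (p.s) for all s.
   If two players other than i play the same strategy, the transposition
   swapping them is odd and fixes p, so every skew-symmetric game vanishes at
   p; otherwise the stabiliser of p is trivial.  Hence a skew-symmetric game is
   determined by its values on a transversal of the free orbits, and the
   antisymmetrised indicators of the transversal points form a basis of the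
   space.  Each free orbit has n! points and there are n * k * k^_(n-1) free
   points (a player, its strategy, and an injective assignment of strategies
   to the others), so there are k * 'C(k, n-1) free orbits. *)

Section Relabelling.
Variables n k : nat.
Local Open Scope group_scope.
Local Notation point := ('I_n * profile n k)%type.
Implicit Types (p : point) (s : 'S_n).

Definition relabel p s : point := (s p.1, [ffun j => p.2 (s^-1 j)]).

Lemma relabel1 : relabel^~ 1 =1 id.
Proof.
case=> i x; rewrite /relabel perm1; congr pair.
by apply/ffunP=> j; rewrite ffunE invg1 perm1.
Qed.

Lemma relabelM p : act_morph relabel p.
Proof.
move=> s t; rewrite /relabel /= permM; congr pair; apply/ffunP=> j.
by rewrite !ffunE invMg permM.
Qed.

Definition relabel_action := TotalAction relabel1 relabelM.
Local Notation to := relabel_action.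

Definition free_point p := 'C[p | to] == 1%g.

Lemma astab1_odd p :
  ~~ dinjectiveb p.2 (predC1 p.1) -> exists2 s, odd_perm s & s \in 'C[p | to].
Proof.
case: p => i x /dinjectivePn [j ji [l /andP [lj li] xjl]]; rewrite !inE /= in ji li xjl.
exists (tperm j l); first by rewrite odd_tperm eq_sym.
apply/astab1P; rewrite /= /relabel /= tpermD ?(eq_sym i) //; congr pair.
by apply/ffunP=> m; rewrite ffunE tpermV; case: tpermP => // ->.
Qed.

Lemma astab1_dinjective p :
  dinjectiveb p.2 (predC1 p.1) -> 'C[p | to] = 1%g.
Proof.
case: p => i x /dinjectiveP x_inj; apply/trivgP/subsetP => s /astab1P [si xs].
rewrite inE; apply/eqP/permP => j; rewrite perm1.
have [-> // | ji] := eqVneq j i.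
have sji : s j != i by rewrite -[i in _ != i]si (inj_eq perm_inj).
apply: x_inj; rewrite ?inE //.
by have := congr1 (fun f : profile n k => f (s j)) xs; rewrite ffunE permK.
Qed.

Lemma free_pointE p : free_point p = dinjectiveb p.2 (predC1 p.1).
Proof.
apply/idP/idP => [free_p | /astab1_dinjective Cp]; last by rewrite /free_point Cp.
apply: contraLR free_p => /astab1_odd [s odd_s Cs]; apply/trivgPn.
by exists s => //; apply: contraTneq odd_s => ->; rewrite odd_perm1.
Qed.

Definition free_points := [set p | free_point p].

Lemma acts_free_points : [acts [set: 'S_n], on free_points | to].
Proof. by apply/actsP => s _ p; rewrite !inE /free_point astab1_act conjsg_eq1. Qed.

Lemma card_free_orbit p : free_point p -> #|orbit to [set: 'S_n] p| = n`!.
Proof.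
move/eqP=> Cp; have := card_orbit_stab to [set: 'S_n] p.
by rewrite setTI Cp cards1 muln1 cardsT card_Sn.
Qed.

Lemma card_free_points_orbits :
  #|free_points| = (#|orbit to [set: 'S_n] @: free_points| * n`!)%N.
Proof.
apply: card_uniform_partition (orbit_partition acts_free_points).
by move=> _ /imsetP [p free_p ->]; apply: card_free_orbit; rewrite inE in free_p.
Qed.

Lemma dinjective_off_lift i (x : profile n k) :
  dinjectiveb x (predC1 i) = injectiveb [ffun j => x (lift i j)].
Proof.
apply/dinjectiveP/injectiveP => [x_inj j l | x_inj j l].
  rewrite !ffunE => xjl; apply: (lift_inj (h := i)).
  by apply: x_inj => //; rewrite inE eq_sym neq_lift.
rewrite !inE; case: (unliftP i j) => [j' -> _ | -> ]; last by rewrite eqxx.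
case: (unliftP i l) => [l' -> _ | -> ]; last by rewrite eqxx.
by move=> xjl; congr lift; apply: x_inj; rewrite !ffunE.
Qed.

Lemma card_free_points : #|free_points| = (n * (k * k ^_ n.-1))%N.
Proof.
pose split_point p := ((p.1, p.2 p.1), [ffun j => p.2 (lift p.1 j)]).
pose merge_point (q : 'I_n * 'I_k * {ffun 'I_n.-1 -> 'I_k}) : point :=
  (q.1.1, [ffun j => if unlift q.1.1 j is Some j' then q.2 j' else q.1.2]).
have splitK : cancel split_point merge_point.
  case=> i x; congr pair; apply/ffunP => j; rewrite /= !ffunE.
  by case: unliftP => [j' -> | ->]; rewrite ?ffunE.
have mergeK : cancel merge_point split_point.
  case=> [[i a] f]; rewrite /split_point /= ffunE unlift_none; congr pair.
  by apply/ffunP => j; rewrite !ffunE liftK.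
have -> : free_points = merge_point @:
    setX [set: 'I_n * 'I_k] [set f : {ffun 'I_n.-1 -> 'I_k} | injectiveb f].
  rewrite (can2_imset_pre _ mergeK splitK); apply/setP => p.
  by rewrite !inE free_pointE dinjective_off_lift.
rewrite (card_imset _ (can_inj mergeK)) cardsX cardsT card_prod card_inj_ffuns.
by rewrite !card_ord mulnA.
Qed.

End Relabelling.

Local Open Scope ring_scope.

Section SkewGames.
Variables (R : realType) (n k : nat).
Local Notation point := ('I_n * profile n k)%type.
Local Notation to := (relabel_action n k).
Local Notation skew := (skew_space R n k).
Local Notation X := (orbit_transversal to [set: 'S_n] (free_points n k)).
Implicit Types (c : game R n k) (p r : point) (s : 'S_n).

Lemma sgnRM s t : sgnR R (s * t)%g = sgnR R s * sgnR R t.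
Proof. by rewrite /sgnR odd_permM signr_addb. Qed.

Lemma skew_spaceP c :
  c \in skew <-> forall p s, c p = sgnR R s * c (relabel p s).
Proof.
rewrite mem_skew_space; split=> [skew_c [i x] s | skew_c s i x]; first exact: skew_c.
exact: skew_c (i, x) s.
Qed.

Lemma skew_nonfree_eq0 c p : c \in skew -> ~~ free_point p -> c p = 0.
Proof.
move/skew_spaceP => skew_c.
rewrite free_pointE => /astab1_odd [s odd_s /astab1P /= fix_p].
by apply/eqP; rewrite -eqNr -mulN1r {2}(skew_c p s) fix_p /sgnR odd_s.
Qed.

Definition antisym_delta r : game R n k :=
  [ffun p => \sum_s sgnR R s * (relabel p s == r)%:R].

Lemma antisym_delta_skew r : antisym_delta r \in skew.
Proof.
apply/skew_spaceP => p t; rewrite !ffunE mulr_sumr (reindex_inj (mulgI t)) /=.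
by apply: eq_bigr => s _; rewrite relabelM sgnRM mulrA.
Qed.

Lemma antisym_delta_transversal r r' :
  r \in X -> r' \in X -> antisym_delta r r' = (r' == r)%:R.
Proof.
have [_ /subsetP X_free X_orbit _] := orbit_transversalP (acts_free_points n k).
move=> Xr Xr'; rewrite ffunE (bigD1 1%g) //= relabel1.
rewrite big1 ?addr0 /sgnR ?odd_perm1 ?mul1r //.
move=> s s_neq1; have [fix_r|] := eqVneq (relabel r' s) r; last by rewrite mulr0.
have r'r : r' = r.
  by apply/eqP; rewrite -X_orbit // -fix_r (mem_orbit to) ?inE.
have := X_free r Xr; rewrite inE => /eqP C_r.
suff : s \in ('C[r | to])%g by rewrite C_r inE (negbTE s_neq1).
by apply/astab1P; rewrite -{2}fix_r r'r.
Qed.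

Lemma skew_transversal_eq0 c : c \in skew -> {in X, forall r, c r = 0} -> c = 0.
Proof.
have [_ _ _ X_meets_orbits] := orbit_transversalP (acts_free_points n k).
move=> skew_c c_X; apply/ffunP => p; rewrite ffunE.
have [free_p | ] := boolP (free_point p); last exact: skew_nonfree_eq0.
have [s _ Xps] : exists2 s, s \in [set: 'S_n] & relabel p s \in X.
  by apply: X_meets_orbits; rewrite inE.
by move/skew_spaceP: skew_c => /(_ p s) ->; rewrite c_X ?mulr0.
Qed.

Lemma sum_antisym_delta_transversal (a : 'I_#|X| -> R) (l : 'I_#|X|) :
  (\sum_j a j *: antisym_delta (enum_val j)) (enum_val l) = a l.
Proof.
have delta_e (j : 'I_#|X|) : antisym_delta (enum_val j) (enum_val l) = (l == j)%:R.
  by rewrite antisym_delta_transversal ?enum_valP // (inj_eq enum_val_inj).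
rewrite sum_ffunE (bigD1 l) //= big1 => [|j /negbTE lj]; rewrite ffunE delta_e.
  by rewrite eqxx addr0 [_ *: _]mulr1.
by rewrite eq_sym lj [_ *: _]mulr0.
Qed.

Lemma dim_skew_space_transversal : \dim skew = #|X|.
Proof.
pose B := [tuple antisym_delta (enum_val j) | j < #|X|].
have Be (j : 'I_#|X|) : B`_j = antisym_delta (enum_val j).
  by rewrite -tnth_nth tnth_mktuple.
have B_skew (j : 'I_#|X|) : B`_j \in skew by rewrite Be antisym_delta_skew.
have freeB : free B.
  apply/freeP => a a0 l; rewrite -(sum_antisym_delta_transversal a l).
  by under eq_bigr do rewrite -Be; rewrite a0 ffunE.
suff -> : skew = <<B>>%VS by rewrite (eqnP freeB) size_tuple.
apply/vspaceP => c; apply/idP/idP => [skew_c | /coord_span ->]; last first.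
  by rewrite rpred_sum // => j _; rewrite rpredZ.
suff -> : c = \sum_(j < #|X|) c (enum_val j) *: B`_j.
  by rewrite memv_suml // => j _; rewrite memvZ // memv_span // mem_nth ?size_tuple.
under eq_bigr do rewrite Be.
apply/eqP; rewrite -subr_eq0; apply/eqP/skew_transversal_eq0 => [|r Xr].
  by rewrite rpredB // rpred_sum // => j _; rewrite rpredZ // antisym_delta_skew.
by rewrite -(enum_rankK_in Xr Xr) !ffunE sum_antisym_delta_transversal subrr.
Qed.

End SkewGames.

Lemma dim_skew_space (R : realType) (n k : nat) :
  (0 < n)%N -> \dim (skew_space R n k) = (k * 'C(k, n.-1))%N.
Proof.
case: n => [//|n] _; rewrite dim_skew_space_transversal.
have [trX _ _ _] := orbit_transversalP (acts_free_points n.+1 k).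
have := card_free_points_orbits n.+1 k.
rewrite (card_transversal trX) card_free_points factS -bin_ffact /=.
move=> card_free; apply/eqP.
rewrite -(eqn_pmul2r (fact_gt0 n)) -(eqn_pmul2l (ltn0Sn n)).
by apply/eqP; rewrite mulnCA -card_free !mulnA.
Qed.

Theorem corollary4p6 (R : realType) (n k : nat) :
  (2 <= n)%N -> (n <= k.+1)%N ->
  \dim (skew_space R n k) = (k * 'C(k, n.-1))%N.
Proof.
by move=> n_ge2 _; apply: dim_skew_space; apply: ltnW.
Qed.
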